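(* Let $\Gamma\in\mathbb{R}^{n\times m}$ and let $R:\mathbb{R}^n_{\ge0}\to\mathbb{R}^m$ be locally Lipschitz such that $\dot S=\Gamma R(S)$ leaves $\mathbb{R}^n_{\ge0}$ invariant and is forward complete; fix $\sigma\in\mathbb{R}^n_{\ge0}$ and consider $\dot x=R(\sigma+\Gamma x)$ on $X_\sigma=\{x\in\mathbb{R}^m:\sigma+\Gamma x\ge0\}$. Suppose $\Gamma$ has rank exactly $m-1$, with kernel spanned by a unit vector $v$ all of whose entries are positive. Let $x(t)$, $t\ge0$, be a solution of $\dot x=R(\sigma+\Gamma x)$ and $\pi_v(x)=x-(v'x)v$. Then $\Gamma x(t)$ is bounded if and only if $\pi_v x(t)$ is bounded.
   Context: Inequalities between vectors are componentwise; prime denotes transpose. *)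

From HB Require Import structures.
From mathcomp Require Import all_boot all_order all_algebra.
From mathcomp Require Import all_classical all_reals all_analysis.
Set Implicit Arguments. Unset Strict Implicit. Unset Printing Implicit Defensive.
Import Order.TTheory GRing.Theory Num.Theory.
Import numFieldNormedType.Exports.
Local Open Scope classical_set_scope.
Local Open Scope ring_scope.

Definition nonneg_vec (R : realType) (n : nat) (S : 'cV[R]_n) : Prop :=
  forall i, 0 <= S i 0.

(* local Lipschitz continuity of f on the set D (norms = max norms of matrices) *)
Definition locally_lipschitz_on (R : realType) (n m : nat)
  (D : set 'cV[R]_n) (f : 'cV[R]_n -> 'cV[R]_m) : Prop :=
  forall x0, D x0 -> exists2 e : R, 0 < e & exists L : R,
    forall y z, D y -> D z -> `|y - x0| < e -> `|z - x0| < e ->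
      `|f y - f z| <= L * `|y - z|.

Definition forward_solution (R : realType) (k : nat)
  (F : 'cV[R]_k -> 'cV[R]_k) (x : R -> 'cV[R]_k) : Prop :=
  {within [set t : R | 0 <= t], continuous x} /\
  forall t : R, 0 < t -> is_derive t 1 x (F (x t)).

(* orthogonal projection onto v^perp (for unit v): pi_v(x) = x - (v'x) v *)
Definition proj_perp (R : realType) (m : nat) (v x : 'cV[R]_m) : 'cV[R]_m :=
  x - ((v^T *m x) 0 0) *: v.

Definition bounded_traj (R : realType) (k : nat) (y : R -> 'cV[R]_k) : Prop :=
  exists M : R, forall t : R, 0 <= t -> `|y t| <= M.

From HB Require Import structures.
From mathcomp Require Import all_boot all_order all_algebra.
From mathcomp Require Import all_classical all_reals all_analysis.
Import Order.TTheory GRing.Theory Num.Theory.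
Import numFieldNormedType.Exports.
Local Open Scope classical_set_scope.
Local Open Scope ring_scope.

(* Only linear algebra is involved: [Gamma] and [pi_v] have the same kernel
   (the line spanned by [v]), so each of them factors linearly through the
   other, and a linear image of a bounded trajectory is bounded.  Stacking
   [Gamma] on top of [v^T] gives an injective matrix, whose left inverse
   recovers [pi_v y] from [Gamma y] because [v^T (pi_v y) = 0]. *)

Lemma mx_norm_entry_le {R : realType} {p q : nat} (A : 'M[R]_(p, q)) i j :
  `|A i j| <= `|A|.
Proof.
rewrite [leRHS]/Num.norm /= mx_normrE.
by apply/bigmax_geP; right; exists (i, j).
Qed.

Lemma mx_norm_mulmx_le {R : realType} {p q : nat} (A : 'M[R]_(p, q)) (z : 'cV[R]_q) :
  `|A *m z| <= (\sum_j `|col j A|) * `|z|.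
Proof.
have -> : A *m z = \sum_j z j 0 *: col j A.
  apply/matrixP => i k; rewrite !mxE summxE; apply: eq_bigr => j _.
  by rewrite !mxE ord1 mulrC.
rewrite mulr_suml; apply: le_trans (ler_norm_sum _ _ _) _.
apply: ler_sum => j _; rewrite normrZ mulrC; apply: ler_wpM2l => //.
exact: mx_norm_entry_le.
Qed.

Lemma bounded_traj_mulmx {R : realType} {p q : nat} (A : 'M[R]_(p, q))
    (y : R -> 'cV[R]_q) :
  bounded_traj y -> bounded_traj (fun t => A *m y t).
Proof.
move=> [M yM]; exists ((\sum_j `|col j A|) * M) => t t0.
apply: le_trans (mx_norm_mulmx_le A _) _; apply: ler_wpM2l; last exact: yM.
by apply: sumr_ge0 => j _.
Qed.

Section ProjPerp.
Context {R : realType} {n m : nat} {v : 'cV[R]_m}.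
Hypothesis v_unit : (v^T *m v) 0 0 = 1.

Lemma mulmx_proj_perp (A : 'M[R]_(n, m)) y :
  A *m v = 0 -> A *m proj_perp v y = A *m y.
Proof. by move=> Av0; rewrite mulmxBr -scalemxAr Av0 scaler0 subr0. Qed.

Lemma trmx_mulmx_proj_perp y : v^T *m proj_perp v y = 0.
Proof.
apply/matrixP => i j; rewrite !ord1 mulmxBr -scalemxAr.
by rewrite mxE [X in _ + X]mxE [X in _ - X]mxE v_unit mulr1 [RHS]mxE subrr.
Qed.

Lemma proj_perp_factor (Gamma : 'M[R]_(n, m)) :
  Gamma *m v = 0 -> (forall y, Gamma *m y = 0 -> exists c, y = c *: v) ->
  exists L : 'M[R]_(m, n), forall y, proj_perp v y = L *m (Gamma *m y).
Proof.
move=> Gv0 kerG; pose A := col_mx Gamma v^T.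
have A_free : row_free A^T.
  apply: inj_row_free => w /(congr1 trmx); rewrite trmx_mul trmxK trmx0.
  rewrite mul_col_mx => /eqP; rewrite col_mx_eq0 => /andP[/eqP Gw /eqP vw].
  have [c wc] := kerG _ Gw.
  move/matrixP: vw => /(_ 0 0); rewrite wc -scalemxAr mxE v_unit mulr1 mxE => c0.
  by rewrite -[w]trmxK wc c0 scale0r trmx0.
have /row_fullP[B BA] : row_full A by rewrite /row_full -mxrank_tr.
exists (lsubmx B) => y.
rewrite -[proj_perp v y]mul1mx -BA -mulmxA mul_col_mx trmx_mulmx_proj_perp.
by rewrite mulmx_proj_perp // -{1}[B]hsubmxK mul_row_col mulmx0 addr0.
Qed.

End ProjPerp.

Theorem lemma5 (R : realType) (n m : nat) (Gamma : 'M[R]_(n, m))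
  (Rf : 'cV[R]_n -> 'cV[R]_m) (sigma : 'cV[R]_n) (v : 'cV[R]_m)
  (x : R -> 'cV[R]_m) :
  locally_lipschitz_on (@nonneg_vec R n) Rf ->
  (forall S0 : 'cV[R]_n, nonneg_vec S0 ->
     exists S : R -> 'cV[R]_n,
       [/\ S 0 = S0, forward_solution (fun s => Gamma *m Rf s) S
         & forall t : R, 0 <= t -> nonneg_vec (S t)]) ->
  nonneg_vec sigma ->
  \rank Gamma = (m - 1)%N ->
  (forall y : 'cV[R]_m, Gamma *m y = 0 <-> exists c : R, y = c *: v) ->
  (v^T *m v) 0 0 = 1 ->
  (forall i, 0 < v i 0) ->
  forward_solution (fun y => Rf (sigma + Gamma *m y)) x ->
  (forall t : R, 0 <= t -> nonneg_vec (sigma + Gamma *m x t)) ->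
  (bounded_traj (fun t => Gamma *m x t) <-> bounded_traj (fun t => proj_perp v (x t))).
Proof.
move=> _ _ _ _ kerG v_unit _ _ _.
have Gv0 : Gamma *m v = 0 by apply/kerG; exists 1; rewrite scale1r.
have [L projL] := proj_perp_factor v_unit Gamma Gv0 (fun y => (kerG y).1).
have GxE : (fun t => Gamma *m x t) = (fun t => Gamma *m (L *m (Gamma *m x t))).
  by apply/funext => t; rewrite -projL mulmx_proj_perp.
have -> : (fun t => proj_perp v (x t)) = (fun t => L *m (Gamma *m x t)).
  by apply/funext => t; rewrite projL.
split=> bounded_x; first exact: bounded_traj_mulmx L _ bounded_x.
by rewrite GxE; exact: bounded_traj_mulmx Gamma _ bounded_x.
Qed.
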